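(* Let $\mathcal I$ be an instance of fair representation $k$-median. Run an $\alpha$-approximation algorithm for (unconstrained) $k$-median on the data points of $\mathcal I$, obtaining centers $\overline{\mathcal C}=\{\overline c_1,\dots,\overline c_k\}$ and an assignment $\phi$ of each point to a nearest center, and let $\mathcal I'$ be the reduced instance obtained by moving each data point $x$ to location $\phi(x)$ (same points, groups, and fairness constraints). Let $\mathrm{OPT}_{\mathcal I}$ and $\mathrm{OPT}_{\mathcal I'}$ be the costs of optimal fair clusterings of $\mathcal I$ and $\mathcal I'$. If there is a $\beta_k$-approximation algorithm for fair representation $k$-median on $\mathcal I'$, then there is an $(\alpha\beta_k+\alpha+\beta_k)$-approximation algorithm for fair representation $k$-median on $\mathcal I$.
   Context: Fair representation $k$-median: data points $X$, each with a location in a metric space $(M,d)$ and belonging to one of $\ell$ groups $X_1,\dots,X_\ell$; parameters $0\le\alpha_j\le\beta_j\le1$. A solution is $k$ centers and an assignment of points to centers giving clusters $C_1,\dots,C_k$; it is fair if $\alpha_j|C_i|\le|C_i\cap X_j|\le\beta_j|C_i|$ for all $i,j$. Its cost is the sum over points of the distance from the point's location to its center. A $\rho$-approximation algorithm returns a fair clustering of cost at most $\rho$ times the optimum fair cost. The (unconstrained) $k$-median problem is the same without fairness constraints. *)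

From mathcomp Require Import all_boot all_order all_algebra.
From mathcomp Require Import reals.
Set Implicit Arguments. Unset Strict Implicit. Unset Printing Implicit Defensive.
Import Order.TTheory GRing.Theory Num.Theory.
Local Open Scope ring_scope.

Definition is_metric (R : realType) (M : Type) (d : M -> M -> R) : Prop :=
  [/\ (forall x y, 0 <= d x y),
      (forall x y, d x y = 0 <-> x = y),
      (forall x y, d x y = d y x) &
      (forall x y z, d x z <= d x y + d y z)].

Definition cost (R : realType) (M : Type) (d : M -> M -> R) (X : finType)
  (k : nat) (loc : X -> M) (c : 'I_k -> M) (s : X -> 'I_k) : R :=
  \sum_(x : X) d (loc x) (c (s x)).

Definition fair (R : realType) (X : finType) (l k : nat) (grp : X -> 'I_l)
  (lo hi : 'I_l -> R) (s : X -> 'I_k) : Prop :=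
  forall (i : 'I_k) (j : 'I_l),
    lo j * (#|[set x | s x == i]|)%:R
      <= (#|[set x | (s x == i) && (grp x == j)]|)%:R
    /\ (#|[set x | (s x == i) && (grp x == j)]|)%:R
      <= hi j * (#|[set x | s x == i]|)%:R.

(** Moving every point x to its center cbar (phi x) changes the cost of any
    clustering by at most the displacement D = cost d loc cbar phi, by the
    triangle inequality, and D <= alpha OPT_I.  Hence the reduced instance
    satisfies OPT_I' <= D + OPT_I, and the beta_k-approximate clustering of I'
    costs at most D + beta_k (D + OPT_I) <= (alpha beta_k + alpha + beta_k) OPT_I
    on I. *)
From mathcomp Require Import all_boot all_order all_algebra.
From mathcomp Require Import reals.
From mathcomp Require Import lra.
Import Order.TTheory GRing.Theory Num.Theory.
Local Open Scope ring_scope.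

Lemma cost_relocate (R : realType) (M : Type) (d : M -> M -> R) (X : finType)
    (k : nat) (loc loc' : X -> M) (c : 'I_k -> M) (s : X -> 'I_k) :
  (forall x y z, d x z <= d x y + d y z) ->
  cost d loc c s <= \sum_(x : X) d (loc x) (loc' x) + cost d loc' c s.
Proof.
move=> dtri; rewrite /cost -big_split /=.
by apply: ler_sum => x _; exact: dtri.
Qed.

Lemma composed_approx_bound (R : realFieldType) (alpha beta D C T T' C' : R) :
  0 <= beta -> D <= alpha * C ->
  T <= D + T' -> T' <= beta * C' -> C' <= D + C ->
  T <= (alpha * beta + alpha + beta) * C.
Proof.
move=> beta_ge0 hD hT hT' hC'.
have hbC' : beta * C' <= beta * (D + C) by exact: ler_wpM2l.
have hbD : (1 + beta) * D <= (1 + beta) * (alpha * C).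
  by apply: ler_wpM2l => //; rewrite addr_ge0.
lra.
Qed.

Theorem claim2 (R : realType) (M : Type) (d : M -> M -> R) (X : finType)
  (l k : nat) (grp : X -> 'I_l) (lo hi : 'I_l -> R) (loc : X -> M)
  (alpha betak : R)
  (cbar : 'I_k -> M) (phi : X -> 'I_k)      (* unconstrained alpha-approx solution *)
  (c' : 'I_k -> M) (sigma' : X -> 'I_k) :   (* betak-approx fair solution of I' *)
  is_metric d ->
  (forall j, 0 <= lo j /\ lo j <= hi j /\ hi j <= 1) ->
  1 <= alpha -> 1 <= betak ->
  (* phi assigns each point to a nearest center *)
  (forall x i, d (loc x) (cbar (phi x)) <= d (loc x) (cbar i)) ->
  (* alpha-approximation for unconstrained k-median on I *)
  (forall (c : 'I_k -> M) (s : X -> 'I_k),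
     cost d loc cbar phi <= alpha * cost d loc c s) ->
  (* (c', sigma') is a betak-approximate fair clustering of the reduced instance I' *)
  fair grp lo hi sigma' ->
  (forall (c : 'I_k -> M) (s : X -> 'I_k), fair grp lo hi s ->
     cost d (fun x => cbar (phi x)) c' sigma'
       <= betak * cost d (fun x => cbar (phi x)) c s) ->
  (* the same clustering is an (alpha*betak+alpha+betak)-approximate fair clustering of I *)
  fair grp lo hi sigma' /\
  (forall (c : 'I_k -> M) (s : X -> 'I_k), fair grp lo hi s ->
     cost d loc c' sigma' <= (alpha * betak + alpha + betak) * cost d loc c s).
Proof.
move=> [_ _ dsym dtri] _ _ betak_ge1 _ happrox fair' hopt'.
split=> // c s fair_s.
set reloc := fun x => cbar (phi x).
have displacement_sym :
    \sum_(x : X) d (reloc x) (loc x) = cost d loc cbar phi.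
  by apply: eq_bigr => x _; rewrite dsym.
apply: (@composed_approx_bound R alpha betak _ _ _ _ _ _ (happrox c s) _ (hopt' c s fair_s)).
- exact: le_trans ler01 betak_ge1.
- exact: cost_relocate.
- by rewrite -displacement_sym; exact: cost_relocate.
Qed.
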